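(* Let $\operatorname{d}_q=q\frac{d}{dq}$. For all integers $s_1,\dots,s_l\ge1$, $r_1,\dots,r_l\ge0$, \[ \operatorname{d}_q\left[\begin{matrix}s_1,\dots,s_l\\ r_1,\dots,r_l\end{matrix}\right]=\sum_{j=1}^{l}s_j(r_j+1)\left[\begin{matrix}s_1,\dots,s_{j-1},\,s_j+1,\,s_{j+1},\dots,s_l\\ r_1,\dots,r_{j-1},\,r_j+1,\,r_{j+1},\dots,r_l\end{matrix}\right]. \] Consequently $\operatorname{d}_q\big(\operatorname{Fil}_{k,d,l}\big)\subset\operatorname{Fil}_{k+1,d+1,l}$ for all $k,d,l\ge0$.
   Context: Bi-brackets: for integers $s_1,\dots,s_l\ge1$, $r_1,\dots,r_l\ge0$, \[ \left[\begin{matrix}s_1,\dots,s_l\\ r_1,\dots,r_l\end{matrix}\right]:=\sum_{\substack{u_1>\dots>u_l>0\\ v_1,\dots,v_l>0}}\prod_{j=1}^{l}\frac{u_j^{r_j}}{r_j!}\,\frac{v_j^{s_j-1}}{(s_j-1)!}\;q^{u_1v_1+\dots+u_lv_l}\in\mathbb{Q}[[q]]; \] its upper weight is $s_1+\dots+s_l$, lower weight $r_1+\dots+r_l$, length $l$ (the constant $1$ is regarded as the bi-bracket of length $0$). $\operatorname{Fil}_{k,d,l}$ denotes the $\mathbb{Q}$-span of those bi-brackets (including possibly $1$) whose length $t$ satisfies $t\le k$, $t\le d$, $t\le l$, whose upper weight is $\le k$ and whose lower weight is $\le d$ (this is the intersection of the upper weight, lower weight and length filtrations, where the upper weight filtration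 $\operatorname{Fil}^W_k$ is spanned by bi-brackets of length $\le k$ and upper weight $\le k$, the lower weight filtration $\operatorname{Fil}^D_d$ by bi-brackets of length $\le d$ and lower weight $\le d$, and the length filtration $\operatorname{Fil}^L_l$ by bi-brackets of length $\le l$). *)

From mathcomp Require Import all_boot all_order all_algebra.
Set Implicit Arguments. Unset Strict Implicit. Unset Printing Implicit Defensive.
Import Order.TTheory GRing.Theory Num.Theory.
Local Open Scope ring_scope.

(* Formal power series in Q[[q]] are represented by their coefficient
   sequences  nat -> rat  (f N = coefficient of q^N). *)

(* Indices j of 'I_l correspond to 1..l (index 0 = first entry).
   Since u_j, v_j >= 1 and sum u_j v_j = N, all u_j, v_j are <= N,
   so the (finite) sum ranges over u, v : 'I_l -> 'I_N.+1. *)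
Definition bibracket_coef (l : nat) (s r : 'I_l -> nat) (N : nat) : rat :=
  \sum_(u : {ffun 'I_l -> 'I_N.+1} |
          [forall i, 0 < val (u i)]%N &&
          [forall i : 'I_l, forall j : 'I_l, (i < j)%N ==> (val (u j) < val (u i))%N])
  \sum_(v : {ffun 'I_l -> 'I_N.+1} |
          [forall i, 0 < val (v i)]%N && ((\sum_(i < l) val (u i) * val (v i))%N == N))
  \prod_(i < l) ( ((val (u i))%:R ^+ r i / (r i)`!%:R)
                  * ((val (v i))%:R ^+ (s i - 1) / (s i - 1)`!%:R) ).

Definition bibracket (l : nat) (s r : 'I_l -> nat) : nat -> rat :=
  bibracket_coef s r.

(* d_q = q d/dq acts on coefficients by multiplication with N. *)
Definition dq (f : nat -> rat) : nat -> rat := fun N => N%:R * f N.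

Definition incr_at (l : nat) (s : 'I_l -> nat) (j : 'I_l) : 'I_l -> nat :=
  fun i => if i == j then (s i).+1 else s i.

(* Fil_{k,d,l}: Q-span of bi-brackets (length 0 bi-bracket = 1) of length t
   with t <= k, t <= d, t <= l, upper weight <= k, lower weight <= d. *)
Definition inFil (k d l : nat) (f : nat -> rat) : Prop :=
  exists (n : nat) (c : 'I_n -> rat) (L : 'I_n -> nat)
         (S R : forall i : 'I_n, 'I_(L i) -> nat),
    (forall i : 'I_n,
        ((L i <= k)%N /\ (L i <= d)%N /\ (L i <= l)%N /\
         (forall j, (1 <= S i j)%N) /\
         (\sum_(j < L i) S i j <= k)%N /\ (\sum_(j < L i) R i j <= d)%N))
    /\ f = (fun N => \sum_(i < n) c i * bibracket (S i) (R i) N).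

From mathcomp Require Import all_boot all_order all_algebra.
From Stdlib Require Import FunctionalExtensionality.
From mathcomp Require Import ring zify.
Import Order.TTheory GRing.Theory Num.Theory.
Local Open Scope ring_scope.
Set Implicit Arguments. Unset Strict Implicit. Unset Printing Implicit Defensive.

(* The coefficient of q^N in a bi-bracket is a sum over (u, v) with
   N = sum_j u_j v_j, so multiplying it by N distributes over j.  The
   j-th summand is absorbed by the divided powers, since
   u * u^r/r! = (r+1) u^(r+1)/(r+1)!  and  v * v^(s-1)/(s-1)! = s v^s/s!,
   which is the j-th bi-bracket with (s_j, r_j) raised by one.  This raises
   both weights by one and keeps the length, whence the filtration claim. *)

Lemma mulr_divided_power (R : numFieldType) (x : R) (m : nat) :
  x * (x ^+ m / m`!%:R) = m.+1%:R * (x ^+ m.+1 / m.+1`!%:R).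
Proof.
have fact_neq0 : (m`!%:R : R) != 0 by rewrite pnatr_eq0 -lt0n fact_gt0.
have succ_neq0 : (1 + m%:R : R) != 0 by rewrite addrC natr1 pnatr_eq0.
rewrite factS natrM exprS.
by field; rewrite fact_neq0 succ_neq0.
Qed.

Lemma dq_bibracket (l : nat) (s r : 'I_l -> nat) : (forall i, 1 <= s i)%N ->
  dq (bibracket s r) =
  (fun N => \sum_(j < l) ((s j) * (r j).+1)%:R
              * bibracket (incr_at s j) (incr_at r j) N).
Proof.
move=> s_gt0; apply: functional_extensionality => N.
rewrite /dq /bibracket /bibracket_coef mulr_sumr.
under [RHS]eq_bigr => j _ do rewrite mulr_sumr.
rewrite [RHS]exchange_big /=; apply: eq_bigr => u _.
rewrite mulr_sumr.
under [RHS]eq_bigr => j _ do rewrite mulr_sumr.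
rewrite [RHS]exchange_big /=; apply: eq_bigr => v /andP[_ /eqP sum_uv].
rewrite -{1}sum_uv natr_sum mulr_suml; apply: eq_bigr => j _.
rewrite (bigD1 j) //= [in RHS](bigD1 j) //= [LHS]mulrA [RHS]mulrA.
congr (_ * _).
  rewrite /incr_at eqxx; have := s_gt0 j; case: (s j) => [|t] // _.
  rewrite !subn1 /= natrM mulrACA !mulr_divided_power.
  by rewrite mulrACA -natrM mulnC.
by apply: eq_bigr => i /negbTE neq_ij; rewrite /incr_at neq_ij.
Qed.

Definition fil_admissible (k d l L : nat) (S R : 'I_L -> nat) : Prop :=
  (L <= k)%N /\ (L <= d)%N /\ (L <= l)%N /\
  (forall j, (1 <= S j)%N) /\
  (\sum_(j < L) S j <= k)%N /\ (\sum_(j < L) R j <= d)%N.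

Lemma sum_incr_at (L : nat) (S : 'I_L -> nat) (j : 'I_L) :
  (\sum_(i < L) incr_at S j i = (\sum_(i < L) S i).+1)%N.
Proof.
rewrite (bigD1 j) //= [in RHS](bigD1 j) //= {1}/incr_at eqxx addSn.
by congr (_.+1 + _)%N; apply: eq_bigr => i /negbTE neq_ij; rewrite /incr_at neq_ij.
Qed.

Lemma fil_admissible_incr_at k d l L (S R : 'I_L -> nat) (j : 'I_L) :
  fil_admissible k d l S R -> fil_admissible k.+1 d.+1 l (incr_at S j) (incr_at R j).
Proof.
move=> [Lk [Ld [Ll [S_gt0 [wS wR]]]]]; rewrite /fil_admissible !sum_incr_at.
do ![split] => //; try lia.
by move=> i; rewrite /incr_at; case: (i == j).
Qed.

Lemma inFil0 k d l : inFil k d l (fun _ => 0).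
Proof.
exists 0%N, (fun _ => 0), (fun _ => 0%N), (fun _ _ => 0%N), (fun _ _ => 0%N).
by split; [case | apply: functional_extensionality => N; rewrite big_ord0].
Qed.

Lemma inFil_add_bibracket k d l (f : nat -> rat) (c : rat) L (S R : 'I_L -> nat) :
  inFil k d l f -> fil_admissible k d l S R ->
  inFil k d l (fun N => f N + c * bibracket S R N).
Proof.
move=> [n [c' [L' [S' [R' [admissible ->]]]]]] SR_admissible.
exists n.+1, (fun i => if unlift ord_max i is Some i' then c' i' else c),
  (fun i => if unlift ord_max i is Some i' then L' i' else L),
  (fun i => match unlift ord_max i as o
              return 'I_(if o is Some i' then L' i' else L) -> nat
            with Some i' => S' i' | None => S end),
  (fun i => match unlift ord_max i as o
              return 'I_(if o is Some i' then L' i' else L) -> nat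
            with Some i' => R' i' | None => R end).
split; first by move=> i; case: (unlift ord_max i).
apply: functional_extensionality => N; rewrite big_ord_recr /= unlift_none.
congr (_ + _); apply: eq_bigr => i _.
have -> : widen_ord (leqnSn n) i = lift ord_max i by apply: ord_inj; rewrite lift_max.
by rewrite liftK.
Qed.

Lemma inFil_eq k d l (f g : nat -> rat) : inFil k d l f -> f =1 g -> inFil k d l g.
Proof. by move=> f_in /functional_extensionality <-. Qed.

Lemma inFil_add k d l (f g : nat -> rat) :
  inFil k d l f -> inFil k d l g -> inFil k d l (fun N => f N + g N).
Proof.
move=> f_in [n [c [L [S [R [admissible ->]]]]]].
elim: n c L S R admissible => [|n IHn] c L S R admissible.
  by apply: inFil_eq f_in _ => N; rewrite big_ord0 addr0.
pose widen i := widen_ord (leqnSn n) i.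
have := inFil_add_bibracket (c ord_max) (IHn (c \o widen) (L \o widen)
  (fun i => S (widen i)) (fun i => R (widen i)) (fun i => admissible _))
  (admissible ord_max).
by move/inFil_eq; apply => N; rewrite big_ord_recr addrA.
Qed.

Lemma inFil_sum k d l n (G : 'I_n -> nat -> rat) :
  (forall i, inFil k d l (G i)) -> inFil k d l (fun N => \sum_(i < n) G i N).
Proof.
elim: n G => [|n IHn] G G_in.
  by apply: inFil_eq (inFil0 k d l) _ => N; rewrite big_ord0.
apply: inFil_eq (inFil_add (IHn _ (fun i => G_in _)) (G_in ord_max)) _ => N.
by rewrite big_ord_recr.
Qed.

Lemma dq_lincomb n (c : 'I_n -> rat) (L : 'I_n -> nat)
    (S R : forall i : 'I_n, 'I_(L i) -> nat) :
  (forall i j, 1 <= S i j)%N ->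
  dq (fun N => \sum_(i < n) c i * bibracket (S i) (R i) N) =
  (fun N => \sum_(i < n) \sum_(j < L i)
     c i * ((S i j) * (R i j).+1)%:R
       * bibracket (incr_at (S i) j) (incr_at (R i) j) N).
Proof.
move=> S_gt0; apply: functional_extensionality => N.
rewrite /dq mulr_sumr; apply: eq_bigr => i _.
have := congr1 (fun F => F N) (dq_bibracket (R i) (S_gt0 i)).
rewrite /dq mulrCA => ->; rewrite mulr_sumr.
by apply: eq_bigr => j _; rewrite mulrA.
Qed.

Theorem proposition4p2 :
  (forall (l : nat) (s r : 'I_l -> nat),
      (forall i, 1 <= s i)%N ->
      dq (bibracket s r) =
      (fun N => \sum_(j < l) ((s j) * (r j).+1)%:R
                  * bibracket (incr_at s j) (incr_at r j) N))
  /\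
  (forall (k d l : nat) (f : nat -> rat),
      inFil k d l f -> inFil k.+1 d.+1 l (dq f)).
Proof.
split; first exact: dq_bibracket.
move=> k d l f [n [c [L [S [R [admissible ->]]]]]].
rewrite dq_lincomb; last by move=> i; have [_ [_ [_ []]]] := admissible i.
apply: inFil_sum => i; apply: inFil_sum => j.
have := inFil_add_bibracket (c i * ((S i j) * (R i j).+1)%:R) (inFil0 k.+1 d.+1 l)
  (fil_admissible_incr_at j (admissible i)).
by move/inFil_eq; apply => N; rewrite add0r.
Qed.
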